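(* For integers $n\ge 2$ let $F_{2,n}(q)=(q-1)^{n-1}+(q-2)^n\in\mathbb{Z}[q]$. Then for every integer $k\ge 1$, the polynomial $F_{2,2}(q)$ divides $F_{2,6k+2}(q)$.
   Context: $F_{2,n}(q)$ is the factor satisfying $P_{K_{2,n}}(q)=q(q-1)F_{2,n}(q)$, where $P_{K_{2,n}}$ is the chromatic polynomial of the complete bipartite graph $K_{2,n}$. *)

From mathcomp Require Import all_boot all_algebra.
Set Implicit Arguments. Unset Strict Implicit. Unset Printing Implicit Defensive.
Import GRing.Theory.
Local Open Scope ring_scope.

Definition F2 (n : nat) : {poly int} :=
  ('X - 1) ^+ n.-1 + ('X - 2%:P) ^+ n.

From mathcomp Require Import all_boot all_algebra ring.
Set Implicit Arguments. Unset Strict Implicit. Unset Printing Implicit Defensive.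
Import GRing.Theory.
Local Open Scope ring_scope.

(** With x := q - 1 we have F_{2,n} = x^(n-1) + (x-1)^n and
   F_{2,2} = x^2 - x + 1 = Phi_6(x).  Modulo Phi_6(x) the element x is a
   primitive sixth root of unity: (x-1)^2 = -x and (-x)^3 = 1.  Hence
   x^(6k+1) + (x-1)^(6k+2) = x (x^6)^k + (-x) ((-x)^3)^k = x - x = 0. *)

Section CongruenceModulo.

Variables (R : comPzRingType) (p : R).

Definition eqmodr (a b : R) : Prop := exists c : R, a = b + c * p.

Local Notation "a = b %[modr]" := (eqmodr a b) (at level 70, b at next level).

Lemma eqmodrr a : a = a %[modr].
Proof. by exists 0; rewrite mul0r addr0. Qed.

Lemma eqmodr_trans a b d : a = b %[modr] -> b = d %[modr] -> a = d %[modr].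
Proof.
by move=> [c ->] [c' ->]; exists (c' + c); rewrite mulrDl addrA.
Qed.

Lemma eqmodrD a b a' b' :
  a = b %[modr] -> a' = b' %[modr] -> a + a' = b + b' %[modr].
Proof. by move=> [c ->] [c' ->]; exists (c + c'); ring. Qed.

Lemma eqmodrM a b a' b' :
  a = b %[modr] -> a' = b' %[modr] -> a * a' = b * b' %[modr].
Proof.
by move=> [c ->] [c' ->]; exists (b * c' + c * b' + c * c' * p); ring.
Qed.

Lemma eqmodrX a b m : a = b %[modr] -> a ^+ m = b ^+ m %[modr].
Proof.
move=> eq_ab; elim: m => [|m IHm]; first exact: eqmodrr.
by rewrite !exprS; apply: eqmodrM.
Qed.

Lemma eqmodrX_root1 a n m : a ^+ n = 1 %[modr] -> a ^+ (n * m).+1 = a %[modr].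
Proof.
move=> root_a; rewrite exprSr exprM.
apply: eqmodr_trans (eqmodrM (eqmodrX m root_a) (eqmodrr a)) _.
by rewrite expr1n mul1r; apply: eqmodrr.
Qed.

End CongruenceModulo.

Section Cyclotomic6.

Variables (R : comPzRingType) (x : R).

Local Notation p := (x + (x - 1) ^+ 2).
Local Notation "a = b %[modp]" := (eqmodr p a b) (at level 70, b at next level).

Lemma sqr_subr1_eqmod : (x - 1) ^+ 2 = - x %[modp].
Proof. by exists 1; ring. Qed.

Lemma expr6_eqmod : x ^+ 6 = 1 %[modp].
Proof. by exists ((x ^+ 3 - 1) * (x + 1)); ring. Qed.

Lemma exprN3_eqmod : (- x) ^+ 3 = 1 %[modp].
Proof. by exists (- (x + 1)); ring. Qed.

Lemma cyclotomic6_dvd_power_sum k :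
  exists c : R, x ^+ (6 * k).+1 + (x - 1) ^+ (6 * k).+2 = c * p.
Proof.
have eq_x1 : (x - 1) ^+ (6 * k).+2 = - x %[modp].
  have -> : (6 * k).+2 = (2 * (3 * k).+1)%N by rewrite mulnSr mulnA addn2.
  rewrite exprM; apply: eqmodr_trans (eqmodrX _ sqr_subr1_eqmod) _.
  exact: eqmodrX_root1 exprN3_eqmod.
have [c ->] := eqmodrD (eqmodrX_root1 k expr6_eqmod) eq_x1.
by exists c; rewrite subrr add0r.
Qed.

End Cyclotomic6.

(* The statement also holds for k = 0. *)
Theorem proposition4 (k : nat) : (1 <= k)%N ->
  exists r : {poly int}, F2 (6 * k + 2) = r * F2 2.
Proof.
move=> _.
have X_sub2 : 'X - 2%:P = ('X - 1) - 1 :> {poly int}.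
  by rewrite -[2]/(2%:R) polyC_natr; ring.
rewrite /F2 X_sub2 addn2 expr1.
exact: cyclotomic6_dvd_power_sum.
Qed.
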